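(* Let $\Psi$ be a family of real-valued functions with $\sup_{f\in\Psi}\mathrm{Var}[f(X)]\le\sigma^2$ for some $\sigma^2>0$, and let $\mathscr{X}=\{X^f:=m_f-\hat\mu_f:\ f\in\Psi\}$. There exist constants $C_1,C_2,C_3,C_4>0$ depending only on $\sigma^2$ such that the following holds. Let $\varepsilon\in(0,1)$ and suppose that (i) $\mathscr{X}$ is an exponential class whose bracketing covering numbers satisfy $N(\delta)\le C\exp(M\delta^{-p})$ for all $0<\delta\le n$, for some constants $C,M,p>0$ with $p\neq 2$; and (ii) writing $a=\frac{n^2\varepsilon}{C_2}\wedge\frac{n}{4}$, $$\frac{n^{3/2}\varepsilon^2}{C_1}\ \ge\ \Big\{\frac{2\sqrt M}{2-p}\Big(n^{1-\frac p2}-a^{1-\frac p2}\Big)+\sqrt{\log C}\,(n-a)\,\mathbf 1_{\{C>1\}}\Big\}\vee n^{1/2}.$$ Then $$\mathbb{P}\Big(\sup_{f\in\Psi}|m_f-\hat\mu_f|\ge n^2\varepsilon\Big)\le C_3\exp\Big(-\frac{n\varepsilon^2}{C_4}\Big),$$ where $\mathbb P$ is understood as outer probability if $\Psi$ is uncountable.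
   Context: $(X_i)_{i=1}^n$ are i.i.d. real random variables on $(\Omega,\mathcal F,\mathbb P)$, and $X$ is independent of them with the same distribution. For a real function $f$, $m_f=\mathbb E f(X)$. Let $\phi:\mathbb R\to\mathbb R$ be non-decreasing, differentiable, with $-\log(1-x+x^2/2)\le\phi(x)\le\log(1+x+x^2/2)$ for all $x$. For a parameter $\alpha>0$, set $\hat r_f(\mu)=\frac{1}{n\alpha}\sum_{i=1}^n\phi(\alpha(f(X_i)-\mu))$; Catoni's estimator $\hat\mu_f$ is a value (chosen arbitrarily if not unique) with $\hat r_f(\hat\mu_f)=0$. Standing assumption (used in the paper as a consequence of Catoni's deviation bound with suitable $\alpha$): for every $f\in\Psi$ and every $x>0$, $\mathbb P(|m_f-\hat\mu_f|\ge x)\le 2\exp\big(-\frac{nx^2}{2(\sigma^2+x^2)}\big)$. Distance: for $X^f,X^{f'}\in\mathscr X$, $d(X^f,X^{f'})=\|X^f-X^{f'}\|$, where $\|\cdot\|$ is the essential supremum norm on $\Omega$ (assumed finite on $\mathscr X$). Bracketing entropy: for $\delta>0$, $N(\delta)$ is the smallest $m$ such that there are pairs $[D_j^L,D_j^U]\in\mathscr X\times\mathscr X$, $j=1,\dots,m$, with the property that for each element $D\in\mathscr X$ there is $j$ with $D_j^L\le D\le D_j^U$ and $d(D_j^L,D_j^U)\le\delta$. $H(\delta)=\log N(\delta)$. $\mathscr X$ is called an exponential class if $N(\kappa)\le A\exp(B\kappa^{-r})$ for all $0<\kappa\le n$, for some constants $A,B,r>0$. *)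

From HB Require Import structures.
From mathcomp Require Import all_boot all_order all_algebra.
From mathcomp Require Import all_classical all_reals all_analysis.
From mathcomp Require Import ess_sup_inf.
Set Implicit Arguments. Unset Strict Implicit. Unset Printing Implicit Defensive.
Import Order.TTheory GRing.Theory Num.Def Num.Theory.
Import numFieldNormedType.Exports.
Local Open Scope classical_set_scope.
Local Open Scope ring_scope.

Section defs.
Context {d : measure_display} {T : measurableType d} {R : realType}.
Variable P : probability T R.

Definition outerP (A : set T) : \bar R :=
  ereal_inf [set P B | B in [set B | measurable B /\ A `<=` B]].

Definition mutually_independent (I : finType) (Z : I -> T -> R) : Prop :=
  forall B : I -> set R, (forall i, measurable (B i)) ->
    P (\bigcap_i (Z i @^-1` B i)) = (\prod_(i : I) P (Z i @^-1` B i))%E.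

Definition same_distribution (Y Z : T -> R) : Prop :=
  forall B : set R, measurable B -> P (Y @^-1` B) = P (Z @^-1` B).

Definition mean_of (X : T -> R) (f : R -> R) : R := fine ('E_P[f \o X])%E.

Definition catoni_r (n : nat) (Xs : 'I_n -> T -> R) (phi : R -> R) (alpha : R)
  (f : R -> R) (w : T) (mu : R) : R :=
  (n%:R * alpha)^-1 * \sum_(i < n) phi (alpha * (f (Xs i w) - mu)).

Definition Xclass (X : T -> R) (Psi : set (R -> R)) (muhat : (R -> R) -> T -> R)
  : set (T -> R) :=
  [set (fun w => mean_of X f - muhat f w) | f in Psi].

Definition dist_ess (D D' : T -> R) : \bar R :=
  ess_sup P (fun w => (`|D w - D' w|)%:E).

Definition bracket_cover (Xc : set (T -> R)) (delta : R) (m : nat) : Prop :=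
  exists L U : nat -> T -> R,
    (forall j, (j < m)%N -> Xc (L j) /\ Xc (U j) /\ (dist_ess (U j) (L j) <= delta%:E)%E) /\
    (forall D, Xc D -> exists j, (j < m)%N /\ forall w, L j w <= D w <= U j w).

(* bracketing number N(delta) (= +oo if no finite bracketing exists) *)
Definition bracketing_number (Xc : set (T -> R)) (delta : R) : \bar R :=
  ereal_inf [set (m%:R)%:E | m in [set m | bracket_cover Xc delta m]].

End defs.

(* Take one bracketing of the class at scale n: by (i) it has at most
   C exp(M n^-p) brackets, whose endpoints are themselves of the form
   m_f - muhat_f.  Every X^f lies between the endpoints of its bracket, so
   sup_f |X^f| >= x forces some endpoint to have modulus >= x, and a union
   bound with the standing deviation inequality at x = n^2 eps (where it is
   at most 2 exp(-n/4)) bounds the outer probability by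
   4 (C exp(M n^-p) + 1) exp(-n/4).  Condition (ii) with C1 = sigma^2 + 10
   gives C1 <= n eps^2 and C exp(M n^-p) <= exp(n eps^2 / 8), which turns this
   into 8 exp(-n eps^2 / 8). *)

From HB Require Import structures.
From mathcomp Require Import all_boot all_order all_algebra.
From mathcomp Require Import all_classical all_reals all_analysis.
From mathcomp Require Import ring lra.
Set Implicit Arguments. Unset Strict Implicit. Unset Printing Implicit Defensive.
Import Order.TTheory GRing.Theory Num.Def Num.Theory.
Import numFieldNormedType.Exports.
Local Open Scope classical_set_scope.
Local Open Scope ring_scope.

Section outer_probability.
Context {d : measure_display} {T : measurableType d} {R : realType}.
Variable P : probability T R.
Local Open Scope ereal_scope.

Lemma outerP_le_measure {A B : set T} :
  measurable B -> A `<=` B -> outerP P A <= P B.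
Proof. by move=> mB AB; apply: ereal_inf_lbound; exists B. Qed.

Lemma outerP_ge0 (A : set T) : 0 <= outerP P A.
Proof. by apply/ereal_infP => _ [B _ <-]. Qed.

Lemma outerP_fin_num (A : set T) : outerP P A \is a fin_num.
Proof.
rewrite ge0_fin_numE ?outerP_ge0//.
have := outerP_le_measure measurableT (@subsetT _ A).
by rewrite probability_setT => /le_lt_trans; apply; rewrite ltry.
Qed.

Lemma le_outerP (A B : set T) : A `<=` B -> outerP P A <= outerP P B.
Proof.
move=> AB; apply/ereal_infP => _ [C [mC BC] <-].
exact: outerP_le_measure mC (subset_trans AB BC).
Qed.

Lemma outerP_setU (A B : set T) :
  outerP P (A `|` B) <= outerP P A + outerP P B.
Proof.
apply/lee_addgt0Pr => e e0; have e20 : (0 < e / 2)%R by rewrite divr_gt0.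
have [_ [A' [mA' AA'] <-] PA'] := lb_ereal_inf_adherent e20 (outerP_fin_num A).
have [_ [B' [mB' BB'] <-] PB'] := lb_ereal_inf_adherent e20 (outerP_fin_num B).
have := outerP_le_measure (measurableU _ _ mA' mB') (setUSS AA' BB').
move=> /le_trans; apply; apply: le_trans (measureU2 P mA' mB') _.
rewrite [leRHS](_ : _ = outerP P A + (e / 2)%:E + (outerP P B + (e / 2)%:E)).
  by apply: leeD; apply: ltW.
by rewrite addeACA -EFinD -splitr.
Qed.

Lemma outerP_bigcup_ord (m : nat) (A : nat -> set T) :
  outerP P (\bigcup_(j < m) A j) <= \sum_(j < m) outerP P (A j).
Proof.
rewrite bigcup_mkord; elim: m => [|m IH].
  by rewrite !big_ord0 -(measure0 P); exact: outerP_le_measure.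
rewrite !big_ord_recr /=; apply: le_trans (outerP_setU _ _) _.
exact: leeD.
Qed.

Lemma bracket_cover_lt (Xc : set (T -> R)) (delta B : R) :
  bracketing_number P Xc delta <= B%:E ->
  exists2 m : nat, (m%:R < B + 1)%R & bracket_cover P Xc delta m.
Proof.
move=> NB; have : bracketing_number P Xc delta < (B + 1)%:E.
  by apply: le_lt_trans NB _; rewrite lte_fin ltrDl.
by move=> /ereal_inf_lt[_ [m cover <-]]; rewrite lte_fin; exists m.
Qed.

End outer_probability.

Lemma norm_le_bracket (R : realDomainType) (l x u : R) :
  l <= x <= u -> `|x| <= maxr `|l| `|u|.
Proof.
move=> /andP[lx xu]; rewrite le_max.
have [x0|x0] := lerP 0 x.
  by rewrite ger0_norm // (le_trans xu (ler_norm u)) orbT.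
by rewrite ltr0_norm // ler_normr lerN2 lx orbT.
Qed.

Lemma sup_ge_bracket_endpoint (T I : Type) (R : realType) (F : I -> T -> R)
    (Psi : set I) (L U : nat -> T -> R) (m : nat) (x : R) :
  0 < x ->
  (forall f, Psi f -> exists j, (j < m)%N /\ forall w, L j w <= F f w <= U j w) ->
  [set w | (x%:E <= ereal_sup [set (`|F f w|)%:E | f in Psi])%E] `<=`
  \bigcup_(j < m) ([set w | x <= `|L j w|] `|` [set w | x <= `|U j w|]).
Proof.
move=> x0 cover w /= xsup; apply: contrapT => nocross.
have endpoints_lt j : (j < m)%N -> maxr `|L j w| `|U j w| < x.
  move=> jm; rewrite ltNge; apply/negP; rewrite le_max => xle; apply: nocross.
  by exists j => //; case/orP: xle; [left|right].
have : (ereal_sup [set (`|F f w|)%:E | f in Psi] <=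
        (\big[maxr/0]_(j < m) maxr `|L j w| `|U j w|)%:E)%E.
  apply/ereal_supP => _ [f Pf <-]; rewrite lee_fin.
  have [j [jm bracket]] := cover f Pf.
  apply: le_trans (norm_le_bracket (bracket w)) _.
  exact: (le_bigmax _ (fun j : 'I_m => maxr `|L j w| `|U j w|) (Ordinal jm)).
move=> /(le_trans xsup); rewrite lee_fin leNgt => /negP; apply.
by apply: bigmax_lt => // j _; exact: endpoints_lt.
Qed.

Section real_estimates.
Variable R : realType.
Implicit Types a r q N M p e z : R.

(* With D := ln r <= -3/4: for q > 0, exp(q D) <= 1 / (1 - q D) <= 1 - q / 3;
   for q < 0, exp(q D) >= 1 + q D. *)
Lemma powR_gap_ge r q : 0 < r <= 1 / 4 -> q < 1 -> q != 0 -> 1 / 3 <= (1 - r `^ q) / q.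
Proof.
move=> /andP[r0 r4] q1 q0.
have lnr : ln r <= - (3 / 4).
  have /le_ln1Dx : -1 < r - 1 by lra.
  by rewrite subrKC; lra.
rewrite /powR gt_eqF //; set D := ln r in lnr *.
have [qpos|qneg] := ltrP 0 q.
  have E_inv : expR (q * D) * (1 - q * D) <= 1.
    rewrite -[leRHS](expRxMexpNx_1 (q * D)) ler_pM2l ?expR_gt0 //.
    by have := expR_ge1Dx (- (q * D)); lra.
  have qD : 0 < q * - D by apply: mulr_gt0; lra.
  have key : 1 <= (1 - q / 3) * (1 - q * D).
    have : 0 <= q * ((- D - 3 / 4) * (1 - q / 3)).
      by apply: mulr_ge0; [lra | apply: mulr_ge0; lra].
    nra.
  rewrite ler_pdivlMr //; nra.
have qn : q < 0 by rewrite lt_neqAle q0 qneg.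
by rewrite ler_ndivlMr //; have := expR_ge1Dx (q * D); nra.
Qed.

Lemma powR_sub_ge a N q : 0 < a <= N / 4 -> q < 1 -> q != 0 ->
  N `^ q / 3 <= (N `^ q - a `^ q) / q.
Proof.
move=> /andP[a0 aN] q1 q0; have N0 : 0 < N by lra.
have -> : a `^ q = N `^ q * (a / N) `^ q.
  by rewrite -powRM ?(ltW N0) ?divr_ge0 ?ltW // mulrC divfK ?gt_eqF.
rewrite -{2}[N `^ q]mulr1 -mulrBr -mulrA ler_wpM2l ?powR_ge0 // -div1r.
by apply: powR_gap_ge => //; rewrite divr_gt0 //= ler_pdivrMr //; lra.
Qed.

(* The right-hand side is the entropy integral \int_a^N sqrt(M t^-p) dt. *)
Lemma entropy_integral_ge a N M p : 0 < a <= N / 4 -> 0 < p -> p != 2 ->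
  Num.sqrt M * N `^ (1 - p / 2) / 3 <=
  2 * Num.sqrt M / (2 - p) * (N `^ (1 - p / 2) - a `^ (1 - p / 2)).
Proof.
move=> aN p0 p2; have q0 : 1 - p / 2 != 0 by apply: contra_neq p2 => ?; lra.
have -> : 2 * Num.sqrt M / (2 - p) = Num.sqrt M / (1 - p / 2).
  by field; rewrite subr_eq0 eq_sym.
rewrite -!mulrA ler_wpM2l ?sqrtr_ge0 // [leRHS]mulrC.
by apply: powR_sub_ge => //; lra.
Qed.

Lemma entropy_exponent_le N M p z : 0 < N -> 0 <= M ->
  Num.sqrt M * N `^ (1 - p / 2) / 3 <= N * z -> M * N `^ (- p) <= 9 * z ^+ 2.
Proof.
move=> N0 M0; set w := N `^ (- (p / 2)).
have -> : N `^ (1 - p / 2) = N * w by rewrite powRD ?powRr1 ?ltW // (gt_eqF N0) implybT.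
have -> : N `^ (- p) = w * w.
  by rewrite -powRD ?(gt_eqF N0) ?implybT //; congr powR; lra.
have w0 : 0 <= w := powR_ge0 _ _.
have sM0 := sqrtr_ge0 M; have sMM : Num.sqrt M ^+ 2 = M by rewrite sqr_sqrtr.
rewrite mulrCA -mulrA ler_pM2l // => wz.
have u0 : 0 <= Num.sqrt M * w by apply: mulr_ge0.
rewrite -sMM !expr2; nra.
Qed.

Lemma sqr_scaled_signal_le N e C1 : 0 < N -> 0 < e < 1 -> 10 <= C1 ->
  (Num.sqrt N * e ^+ 2 / C1) ^+ 2 <= N * e ^+ 2 / 100.
Proof.
move=> N0 /andP[e0 e1] C1_10.
have /andP[e20 e21] : 0 < e ^+ 2 <= 1 by rewrite exprn_gt0 // expr_le1 ?ltW.
rewrite !exprMn exprVn sqr_sqrtr ?(ltW N0) //.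
apply: (@le_trans _ _ (N * e ^+ 2 / C1 ^+ 2)).
  apply: ler_wpM2r; first by rewrite invr_ge0 sqr_ge0.
  by apply: ler_wpM2l; [lra | rewrite ger_pMr].
apply: ler_wpM2l; first by rewrite mulr_ge0 ?ltW.
rewrite lef_pV2 ?posrE ?exprn_gt0 //; try lra.
by rewrite (_ : 100 = 10 ^+ 2) ?lerXn2r ?nnegrE //; lra.
Qed.

Lemma entropy_constant_le C N a z : 0 < C -> 0 < N -> a <= N / 4 -> 0 <= z ->
  (if 1 < C then Num.sqrt (ln C) * (N - a) else 0) <= N * z ->
  C <= expR (2 * z ^+ 2).
Proof.
move=> C0 N0 aN z0; case: ifPn => [C_gt1 entropy | C_le1 _]; last first.
  by apply: le_trans (expR_ge1Dx _); rewrite -leNgt in C_le1; have := sqr_ge0 z; lra.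
have lnC0 : 0 <= ln C by rewrite ln_ge0 ?ltW.
set c := Num.sqrt (ln C) in entropy; have c0 : 0 <= c := sqrtr_ge0 _.
have cz : c <= 4 / 3 * z.
  have : c * (3 / 4 * N) <= N * z.
    by apply: le_trans entropy; apply: ler_wpM2l => //; lra.
  by move=> h; rewrite -(ler_pM2l N0); nra.
by rewrite -[C]lnK ?posrE // ler_expR -(sqr_sqrtr lnC0) -/c !expr2; nra.
Qed.

Lemma condition_ii_consequences N e M p C C1 C2 :
  1 <= N -> 0 < e < 1 -> 0 < M -> 0 < p -> p != 2 -> 0 < C -> 0 < C2 -> 10 <= C1 ->
    (let a := Num.min (N ^+ 2 * e / C2) (N / 4) in
     Num.max (2 * Num.sqrt M / (2 - p) * (N `^ (1 - p / 2) - a `^ (1 - p / 2))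
              + (if 1 < C then Num.sqrt (ln C) * (N - a) else 0))
             (N `^ (1 / 2))
     <= N `^ (3 / 2) * e ^+ 2 / C1) ->
  C1 <= N * e ^+ 2 /\ C * expR (M * N `^ (- p)) <= expR (N * e ^+ 2 / 8).
Proof.
move=> N1 eH M0 p0 p2 C0 C20 C1_10 /=; set a := Num.min _ _.
have [e0 _] := andP eH; have N0 : 0 < N by lra.
have aN : 0 < a <= N / 4.
  by rewrite ge_min lexx orbT andbT lt_min !divr_gt0 ?mulr_gt0 ?exprn_gt0 //; lra.
have sN0 : 0 < Num.sqrt N by rewrite sqrtr_gt0.
have -> : N `^ (1 / 2) = Num.sqrt N by rewrite div1r powR12_sqrt ?ltW.
have -> : N `^ (3 / 2) * e ^+ 2 / C1 = N * (Num.sqrt N * e ^+ 2 / C1).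
  rewrite (_ : 3 / 2 = 1 + 1 / 2); last lra.
  by rewrite powRD ?gt_eqF ?orbT ?implybT // powRr1 ?ltW // div1r powR12_sqrt ?ltW // !mulrA.
have zz := sqr_scaled_signal_le N0 eH C1_10.
set z := Num.sqrt N * e ^+ 2 / C1 in zz *.
have z0 : 0 <= z by rewrite divr_ge0 ?mulr_ge0 ?sqr_ge0 ?ltW //; lra.
rewrite ge_max => /andP[entropy sqrtN]; split.
  have Nz : N * z = Num.sqrt N * (N * e ^+ 2 / C1) by rewrite /z; field; lra.
  by move: sqrtN; rewrite Nz -[X in X <= _]mulr1 ler_pM2l // ler_pdivlMr; lra.
have T1_ge := entropy_integral_ge M aN p0 p2.
have T1_0 : 0 <= Num.sqrt M * N `^ (1 - p / 2) / 3.
  by rewrite !mulr_ge0 ?sqrtr_ge0 ?powR_ge0.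
set T2 := (if 1 < C then _ else _) in entropy.
have T2_0 : 0 <= T2 by rewrite /T2; case: ifPn => // _; rewrite mulr_ge0 ?sqrtr_ge0 //; lra.
have M_term : M * N `^ (- p) <= 9 * z ^+ 2.
  by apply: entropy_exponent_le (ltW M0) _ => //; lra.
have C_term : C <= expR (2 * z ^+ 2).
  by apply: (entropy_constant_le C0 N0 _ z0 (_ : T2 <= _)); lra.
apply: le_trans (ler_wpM2r (expR_ge0 _) C_term) _.
have : 0 <= N * e ^+ 2 by rewrite mulr_ge0 ?sqr_ge0 ?ltW.
by rewrite -expRD ler_expR; lra.
Qed.

Lemma signal_le_sqr N e : 1 <= N -> 0 < e -> N * e ^+ 2 <= (N ^+ 2 * e) ^+ 2.
Proof.
move=> N1 e0; rewrite exprMn -exprM ler_pM2r ?exprn_gt0 //.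
by rewrite -[leLHS]expr1; apply: ler_weXn2l.
Qed.

Lemma tail_exponent_le N s2 x : 0 <= N -> 0 < s2 <= x ^+ 2 ->
  expR (- (N * x ^+ 2) / (2 * (s2 + x ^+ 2))) <= expR (- (N / 4)).
Proof.
move=> N0 /andP[s0 s2x]; have den0 : 0 < 2 * (s2 + x ^+ 2) by lra.
rewrite ler_expR !mulNr lerN2 ler_pdivlMr //; nra.
Qed.

Lemma count_mul_tail_le m B N e b : 1 <= N -> 0 < e < 1 ->
  0 <= m <= B + 1 -> B <= expR (N * e ^+ 2 / 8) -> 0 <= b <= 2 * expR (- (N / 4)) ->
  m * (b + b) <= 8 * expR (- (N * e ^+ 2) / 8).
Proof.
move=> N1 /andP[e0 e1] /andP[m0 mB] BG /andP[b0 bE].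
have G1 : 1 <= expR (N * e ^+ 2 / 8).
  by rewrite -[leLHS]expR0 ler_expR divr_ge0 ?mulr_ge0 ?sqr_ge0; lra.
have : expR (N * e ^+ 2 / 8) * expR (- (N / 4)) <= expR (- (N * e ^+ 2) / 8).
  rewrite -expRD ler_expR mulNr.
  have : N * e ^+ 2 <= N by rewrite ger_pMr ?expr_le1 ?ltW //; lra.
  lra.
have : m * (b + b) <= (2 * expR (N * e ^+ 2 / 8)) * (4 * expR (- (N / 4))).
  by apply: ler_pM; rewrite ?addr_ge0 //; lra.
lra.
Qed.

End real_estimates.

Theorem theorem2 (R : realType) (sigma2 : R) : 0 < sigma2 ->
  exists C1 C2 C3 C4 : R, [/\ 0 < C1, 0 < C2, 0 < C3 & 0 < C4] /\
  forall (d : measure_display) (T : measurableType d) (P : probability T R)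
    (n : nat) (Xs : 'I_n -> T -> R) (X : T -> R)
    (Psi : set (R -> R)) (phi : R -> R) (alpha : R)
    (muhat : (R -> R) -> T -> R) (eps C M p : R),
    (0 < n)%N ->
    (* X_1..X_n i.i.d. real random variables, X independent of them, same law *)
    (forall i, measurable_fun setT (Xs i)) -> measurable_fun setT X ->
    mutually_independent P
      (fun o : option 'I_n => match o with Some i => Xs i | None => X end) ->
    (forall i, same_distribution P (Xs i) X) ->
    (* variance bound on Psi *)
    (forall f, Psi f -> (f \o X) \in Lfun P 2%:E /\ ('V_P[f \o X] <= sigma2%:E)%E) ->
    (* Catoni's estimator *)
    {homo phi : x y / x <= y} -> (forall x, derivable phi x 1) ->
    (forall x, - ln (1 - x + x ^+ 2 / 2) <= phi x <= ln (1 + x + x ^+ 2 / 2)) ->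
    0 < alpha ->
    (forall f, Psi f -> forall w, catoni_r Xs phi alpha f w (muhat f w) = 0) ->
    (* standing deviation assumption *)
    (forall f, Psi f -> forall x : R, 0 < x ->
       (outerP P [set w | (x <= `|mean_of P X f - muhat f w|)%R]
         <= (2 * expR (- (n%:R * x ^+ 2) / (2 * (sigma2 + x ^+ 2))))%:E)%E) ->
    (* the essential-supremum distance is finite on the class *)
    (forall D D', Xclass P X Psi muhat D -> Xclass P X Psi muhat D' ->
       (dist_ess P D D' < +oo)%E) ->
    0 < eps < 1 ->
    (* (i) exponential class with constants C, M, p, p <> 2 *)
    0 < C -> 0 < M -> 0 < p -> p != 2 ->
    (forall delta, 0 < delta <= n%:R ->
       (bracketing_number P (Xclass P X Psi muhat) delta
         <= (C * expR (M * delta `^ (- p)))%:E)%E) ->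
    (* (ii) *)
    (let a := Num.min (n%:R ^+ 2 * eps / C2) (n%:R / 4) in
     Num.max (2 * Num.sqrt M / (2 - p) * (n%:R `^ (1 - p / 2) - a `^ (1 - p / 2))
              + (if 1 < C then Num.sqrt (ln C) * (n%:R - a) else 0))
             (n%:R `^ (1 / 2))
     <= n%:R `^ (3 / 2) * eps ^+ 2 / C1) ->
    (outerP P [set w | (n%:R ^+ 2 * eps)%:E <=
        ereal_sup [set (`|mean_of P X f - muhat f w|)%:E | f in Psi]]
      <= (C3 * expR (- (n%:R * eps ^+ 2) / C4))%:E)%E.
Proof.
move=> s0; have C1_10 : 10 <= sigma2 + 10 by lra.
exists (sigma2 + 10), 1, 8, 8; split; first by split; lra.
(* The sampling model, the variance bound and Catoni's construction only serve
   to justify the standing deviation inequality, which is assumed directly. *)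
move=> d T P n Xs X Psi phi alpha muhat eps C M p n0 _ _ _ _ _ _ _ _ _ _ deviation _
  epsH C0 M0 p0 p2 bracketing cond_ii.
have N1 : 1 <= n%:R :> R by rewrite ler1n.
have [e0 _] := andP epsH.
have [C1_le entropy_le] :=
  condition_ii_consequences N1 epsH M0 p0 p2 C0 ltr01 C1_10 cond_ii.
have n_range : 0 < (n%:R : R) <= n%:R by rewrite lexx andbT ltr0n.
have [m m_lt [L [U [brackets cover]]]] := bracket_cover_lt (bracketing _ n_range).
set x := n%:R ^+ 2 * eps; have x0 : 0 < x by rewrite mulr_gt0 ?exprn_gt0 ?ltr0n.
set b := 2 * expR (- (n%:R * x ^+ 2) / (2 * (sigma2 + x ^+ 2))).
have endpoint_tail D : Xclass P X Psi muhat D ->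
    (outerP P [set w | (x <= `|D w|)%R] <= b%:E)%E.
  by move=> [f Pf <-]; exact: deviation f Pf x x0.
apply: le_trans (le_outerP P (sup_ge_bracket_endpoint x0 _)) _.
  by move=> f Pf; apply: cover; exists f.
apply: le_trans (outerP_bigcup_ord P _ _) _.
apply: (@le_trans _ _ (\sum_(j < m) (b + b)%:E)%E).
  apply: lee_sum => j _; have [XL [XU _]] := brackets j (ltn_ord j).
  by rewrite EFinD; apply: le_trans (outerP_setU P _ _) (leeD _ _); apply: endpoint_tail.
rewrite sumEFin sumr_const card_ord lee_fin -[_ *+ m]mulr_natl.
apply: (count_mul_tail_le N1 epsH _ entropy_le); first by rewrite ler0n ltW.
have s2x : sigma2 <= x ^+ 2.
  by apply: le_trans (signal_le_sqr N1 e0); apply: le_trans C1_le; rewrite lerDl.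
by rewrite mulr_ge0 ?expR_ge0 // ler_pM2l // tail_exponent_le ?s0.
Qed.
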